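(* Let $p$ be a prime number, $n$ a positive integer and $Q\in\mathbb{Z}[X_1,\dots,X_n]$ a quadratic form. Then the set $R(\mathbb{N}\cap Q(\mathbb{Z}^n))$ is dense in $\mathbb{Q}_p$ if and only if $R(Q(\mathbb{Z}^n))$ is dense in $\mathbb{Q}_p$ and $\mathbb{N}_+\cap Q(\mathbb{Z}^n)\neq\varnothing$. Likewise, $R(\mathbb{N}\cap Q(\mathbb{N}^n))$ is dense in $\mathbb{Q}_p$ if and only if $R(Q(\mathbb{N}^n))$ is dense in $\mathbb{Q}_p$ and $\mathbb{N}_+\cap Q(\mathbb{N}^n)\neq\varnothing$.
   Context: $\mathbb{N}$ denotes the nonnegative integers and $\mathbb{N}_+$ the positive integers. A quadratic form is a homogeneous polynomial of degree two, not all coefficients zero. For a subset $A$ of a field, $R(A)=\{a/b: a,b\in A,\ b\neq 0\}$. For $S\subseteq\mathbb{Z}^n$, $Q(S)=\{Q(\mathbf{x}):\mathbf{x}\in S\}$. Density is with respect to the $p$-adic topology on $\mathbb{Q}_p$. *)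

From HB Require Import structures.
From mathcomp Require Import all_boot all_order all_algebra.
From mathcomp Require Import mpoly.
Set Implicit Arguments. Unset Strict Implicit. Unset Printing Implicit Defensive.
Import Order.TTheory GRing.Theory Num.Theory.
Local Open Scope ring_scope.

Definition quadratic_form (n : nat) (Q : {mpoly int[n]}) : Prop :=
  Q != 0 /\ Q \is @ishomog1 n int 2 mdeg.

Definition vp (p : nat) (x : rat) : int :=
  (logn p `|numq x|%N)%:Z - (logn p `|denq x|%N)%:Z.

(* Q is dense in Q_p and the p-adic
   balls around rationals, {y : |y - x|_p <= p^-k}, form a base of the
   topology, so A (a subset of Q) is dense in Q_p iff every such ball
   around every rational x meets A. *)
Definition dense_in_Qp (p : nat) (A : rat -> Prop) : Prop :=
  forall (x : rat) (k : nat), exists a, A a /\ (a = x \/ (k%:Z <= vp p (a - x))).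

Definition ratio_set (A : int -> Prop) : rat -> Prop :=
  fun q => exists a b : int, A a /\ A b /\ b != 0 /\ q = a%:~R / b%:~R.

Definition values_Z (n : nat) (Q : {mpoly int[n]}) : int -> Prop :=
  fun z => exists x : 'I_n -> int, z = Q.@[x].
Definition values_N (n : nat) (Q : {mpoly int[n]}) : int -> Prop :=
  fun z => exists x : 'I_n -> nat, z = Q.@[fun i => (x i)%:Z].

Definition nonneg_part (S : int -> Prop) : int -> Prop := fun z => S z /\ 0 <= z.

From HB Require Import structures.
From mathcomp Require Import all_boot all_order all_algebra.
From mathcomp Require Import mpoly zify ring lra.
Set Implicit Arguments. Unset Strict Implicit. Unset Printing Implicit Defensive.
Import Order.TTheory GRing.Theory Num.Theory.
Local Open Scope ring_scope.

(* If [Q(w) > 0], then [Q(u + t w) = Q(u) + B t + Q(w) t^2] is positive for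
   large [t] and congruent to [Q(u)] modulo [t]; taking for [t] a large
   multiple of [p^N], every value of [Q] is p-adically approximated by positive
   values.  Replacing numerator and denominator of a ratio [a / b] of values by
   such approximations keeps [v_p(b)], hence moves the ratio p-adically as
   little as we wish.  Conversely, a ratio of nonnegative values has a positive
   denominator. *)

Section TopCoef.
Variable R : nzRingType.
Implicit Types (q : {poly R}) (c : R).

Definition top_coef q (k : nat) c := (size q <= k.+1)%N /\ q`_k = c.

Lemma top_coef0 k : top_coef 0 k 0.
Proof. by split; rewrite ?size_poly0 ?coef0. Qed.

Lemma top_coef1 : top_coef 1 0 1.
Proof. by split; rewrite ?size_poly1 ?coef1. Qed.

Lemma top_coefC c : top_coef c%:P 0 c.
Proof. by split; rewrite ?coefC // size_polyC; case: (c != 0). Qed.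

Lemma top_coef_linear u w : top_coef (w%:P * 'X + u%:P) 1 w.
Proof.
split; last by rewrite coefD coefMX coefC /= coefC addr0.
by rewrite size_MXaddC; case: ifP => // _; rewrite size_polyC; case: (w != 0).
Qed.

Lemma top_coefD q1 q2 k c1 c2 :
  top_coef q1 k c1 -> top_coef q2 k c2 -> top_coef (q1 + q2) k (c1 + c2).
Proof.
move=> [s1 e1] [s2 e2]; split; last by rewrite coefD e1 e2.
by apply: leq_trans (size_polyD _ _) _; rewrite geq_max s1 s2.
Qed.

Lemma top_coefM q1 q2 k1 k2 c1 c2 :
  top_coef q1 k1 c1 -> top_coef q2 k2 c2 -> top_coef (q1 * q2) (k1 + k2) (c1 * c2).
Proof.
move=> [s1 e1] [s2 e2]; split; first by apply: leq_trans (size_polyMleq _ _) _; lia.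
have k1_lt : (k1 < (k1 + k2).+1)%N by rewrite ltnS leq_addr.
rewrite coefM (bigD1 (Ordinal k1_lt)) //= addKn e1 e2 big1 ?addr0 // => j.
rewrite -val_eqE /= neq_ltn => /orP[j_lt | j_gt].
  by rewrite [q2`__]nth_default ?mulr0 //; apply: leq_trans s2 _; lia.
by rewrite [q1`__]nth_default ?mul0r //; apply: leq_trans s1 _.
Qed.

Lemma top_coefX q k c m : top_coef q k c -> top_coef (q ^+ m) (k * m) (c ^+ m).
Proof.
move=> qkc; elim: m => [|m IHm]; last by rewrite !exprS mulnS; apply: top_coefM.
by rewrite muln0 !expr0; apply: top_coef1.
Qed.

End TopCoef.

Section Line.
Variables (R : comNzRingType) (n : nat) (Q : {mpoly R[n]}) (u w : 'I_n -> R).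

Lemma meval_line_poly d : Q \is d.-homog ->
  exists2 P : {poly R}, top_coef P d Q.@[w] &
    forall t, P.[t] = Q.@[fun i => u i + t * w i].
Proof.
move=> /dhomogP homQ.
pose line i := (w i)%:P * 'X + (u i)%:P.
exists (\sum_(m <- msupp Q) (Q@_m)%:P * \prod_i line i ^+ m i); last first.
  move=> t; rewrite mevalE horner_sum; apply: eq_bigr => m _.
  rewrite hornerM hornerC horner_prod; congr (_ * _); apply: eq_bigr => i _.
  by rewrite horner_exp /line !hornerE mulrC addrC.
rewrite mevalE !big_seq; apply: (big_ind2 (fun q c => top_coef q d c)).
- exact: top_coef0.
- by move=> ? ? ? ?; apply: top_coefD.
move=> m mQ; have -> : d = (0 + mdeg m)%N by rewrite (homQ m mQ).
rewrite mdegE; apply: top_coefM; first exact: top_coefC.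
apply: (big_ind3 (fun q k c => top_coef q k c)); first exact: top_coef1.
  by move=> ? ? ? ? ? ?; apply: top_coefM.
by move=> i _; rewrite -[in X in top_coef _ X](mul1n (m i)); apply/top_coefX/top_coef_linear.
Qed.

Lemma meval_quadratic_line : Q \is 2.-homog ->
  exists B, forall t, Q.@[fun i => u i + t * w i] = Q.@[u] + B * t + Q.@[w] * t ^+ 2.
Proof.
move=> /meval_line_poly[P [sizeP <-] evalP].
have expandP t : P.[t] = P`_0 + P`_1 * t + P`_2 * t ^+ 2.
  by rewrite (horner_coef_wide _ sizeP) !big_ord_recr big_ord0 /= add0r mulr1.
have -> : Q.@[u] = P`_0.
  by rewrite -horner_coef0 evalP; apply: meval_eq => i; rewrite mul0r addr0.
by exists P`_1 => t; rewrite -evalP expandP.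
Qed.

End Line.

Lemma quadratic_gt0 (R : realDomainType) (a B c t : R) :
  1 <= c -> `|a| + `|B| + 1 <= t -> 0 < a + B * t + c * t ^+ 2.
Proof.
move=> c_ge1 t_ge.
have a_ge : - `|a| <= a by rewrite lerNl -normrN ler_norm.
have B_ge : - `|B| <= B by rewrite lerNl -normrN ler_norm.
have := normr_ge0 a; have := normr_ge0 B; rewrite expr2; nra.
Qed.

Lemma quadratic_shift n (Q : {mpoly int[n]}) (u w : 'I_n -> int) (m : nat) :
  Q \is 2.-homog -> 0 < Q.@[w] -> (0 < m)%N ->
  exists2 t : nat, 0 < Q.@[fun i => u i + t%:Z * w i] &
    (m%:Z %| Q.@[fun i => u i + t%:Z * w i] - Q.@[u])%Z.
Proof.
move=> homQ Qw_gt0 m_gt0; have [B QuB] := meval_quadratic_line u w homQ.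
exists (m * (`|Q.@[u]| + `|B| + 1))%N; rewrite QuB.
  apply: quadratic_gt0 => //; rewrite PoszM !PoszD !abszE.
  by rewrite ler_peMl ?lez_nat // addr_ge0.
set t := Posz _.
have -> : Q.@[u] + B * t + Q.@[w] * t ^+ 2 - Q.@[u] = (B + Q.@[w] * t) * t by ring.
by rewrite dvdz_mull // /t PoszM dvdz_mulr.
Qed.

Lemma dvdz_pfactor p j (x : int) : prime p -> x != 0 ->
  ((p ^ j)%N%:Z %| x)%Z = (j <= logn p `|x|)%N.
Proof. by move=> p_pr x_neq0; rewrite dvdzE /= pfactor_dvdn // absz_gt0. Qed.

Lemma dvdz_pexp_le p i j (x : int) : (i <= j)%N ->
  ((p ^ j)%N%:Z %| x)%Z -> ((p ^ i)%N%:Z %| x)%Z.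
Proof. by move=> le_ij; apply: dvdz_trans; rewrite dvdzE /= dvdn_exp2l. Qed.

Lemma logn_absz_congr p N (b b' : int) : prime p -> b != 0 -> b' != 0 ->
  (logn p `|b| < N)%N -> ((p ^ N)%N%:Z %| b' - b)%Z -> logn p `|b'| = logn p `|b|.
Proof.
move=> p_pr b_neq0 b'_neq0 lt_bN /(dvdz_pexp_le lt_bN) dvd_b'b.
have dvd_b : ((p ^ logn p `|b|)%N%:Z %| b)%Z by rewrite dvdz_pfactor.
have ge_b : (logn p `|b| <= logn p `|b'|)%N.
  by rewrite -dvdz_pfactor // -[b'](subrK b) rpredD // (dvdz_pexp_le (leqnSn _)).
have le_b : (logn p `|b'| <= logn p `|b|)%N.
  rewrite leqNgt -dvdz_pfactor //; apply/negP => dvd_b'.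
  suff : ((p ^ (logn p `|b|).+1)%N%:Z %| b)%Z by rewrite dvdz_pfactor // ltnn.
  by rewrite -[X in (_ %| X)%Z](subKr b') rpredB.
by apply/eqP; rewrite eqn_leq ge_b le_b.
Qed.

Lemma vp_ratio p (a b : int) : a != 0 -> b != 0 ->
  vp p (a%:~R / b%:~R) = (logn p `|a|)%:Z - (logn p `|b|)%:Z.
Proof.
move=> a_neq0 b_neq0; rewrite /vp; set q : rat := _ / _.
have cross : numq q * b = a * denq q.
  apply: (@intr_inj rat); rewrite !rmorphM /= numqE /q.
  by field; rewrite intr_eq0.
have den_neq0 : denq q != 0 by rewrite denq_eq0.
have num_neq0 : numq q != 0.
  apply: contraNneq a_neq0 => num0; move/eqP: cross.
  by rewrite num0 mul0r eq_sym mulf_eq0 (negbTE den_neq0) orbF.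
have := congr1 (logn p \o absz) cross; rewrite /= !abszM !lognM ?absz_gt0 //.
lia.
Qed.

Lemma ratio_subr (a b : int) (x : rat) : b != 0 ->
  a%:~R / b%:~R - x = (a * denq x - numq x * b)%:~R / (b * denq x)%:~R :> rat.
Proof.
move=> b_neq0; rewrite -{1}[x]divq_num_den !rmorphB !rmorphM /=.
by field; rewrite !intr_eq0 b_neq0 denq_eq0.
Qed.

Lemma ratio_closeP p k (x : rat) (a b : int) : prime p -> b != 0 ->
  (a%:~R / b%:~R = x \/ k%:Z <= vp p (a%:~R / b%:~R - x)) <->
  ((p ^ (k + logn p `|b| + logn p `|denq x|))%N%:Z %| a * denq x - numq x * b)%Z.
Proof.
move=> p_pr b_neq0; rewrite ratio_subr //; set D := a * denq x - numq x * b.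
have den_neq0 : denq x != 0 by rewrite denq_eq0.
have eq_x : (a%:~R / b%:~R = x :> rat) <-> D = 0.
  rewrite -[x in _ = x]divq_num_den (rwP eqP) eqr_div ?intr_eq0 //.
  by rewrite -!rmorphM /= (inj_eq (@intr_inj rat)) -subr_eq0; split=> /eqP.
have [D0 | D_neq0] := eqVneq D 0.
  by rewrite D0 dvdz0; split=> // _; left; apply/eq_x.
rewrite vp_ratio ?mulf_neq0 // dvdz_pfactor // abszM lognM ?absz_gt0 //.
split=> [[/eq_x D0 | le_k] | le_k]; [by rewrite D0 eqxx in D_neq0 | lia | right; lia].
Qed.

Definition pos_approximable (p : nat) (V : int -> Prop) :=
  forall a N, V a -> exists a', [/\ V a', 0 < a' & ((p ^ N)%N%:Z %| a' - a)%Z].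

Lemma dense_ratio_nonneg_part p (V : int -> Prop) : prime p ->
  pos_approximable p V -> dense_in_Qp p (ratio_set V) ->
  dense_in_Qp p (ratio_set (nonneg_part V)).
Proof.
move=> p_pr approxV denseV x k.
have [_ [[a [b [Va [Vb [b_neq0 ->]]]]] /(ratio_closeP k x a p_pr b_neq0) dvd_ab]] :=
  denseV x k.
set e := (k + _ + _)%N in dvd_ab.
have [a' [Va' a'_gt0 dvd_a]] := approxV a e.+1 Va.
have [b' [Vb' b'_gt0 dvd_b]] := approxV b e.+1 Vb.
have b'_neq0 : b' != 0 by rewrite gt_eqF.
exists (a'%:~R / b'%:~R); split; first by exists a', b'; do !split=> //; apply: ltW.
apply/(ratio_closeP k x a' p_pr b'_neq0).
rewrite (logn_absz_congr p_pr b_neq0 b'_neq0 _ dvd_b) -/e; last by rewrite /e; lia.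
have -> : a' * denq x - numq x * b' =
  (a * denq x - numq x * b) + ((a' - a) * denq x - numq x * (b' - b)) by ring.
move: dvd_a dvd_b => /(dvdz_pexp_le (leqnSn e)) dvd_a /(dvdz_pexp_le (leqnSn e)) dvd_b.
by apply: rpredD => //; apply: rpredB; [exact: dvdz_mulr | exact: dvdz_mull].
Qed.

Lemma dense_ratio_setS p (V W : int -> Prop) : (forall z, V z -> W z) ->
  dense_in_Qp p (ratio_set V) -> dense_in_Qp p (ratio_set W).
Proof.
move=> sVW denseV x k; have [q [[a [b [Va [Vb bq]]]] close_q]] := denseV x k.
by exists q; split=> //; exists a, b; split; [exact: sVW | split; first exact: sVW].
Qed.

Lemma dense_ratio_nonneg_pos p (V : int -> Prop) :
  dense_in_Qp p (ratio_set (nonneg_part V)) -> exists z, V z /\ 0 < z.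
Proof.
move=> /(_ 0 0%N)[_ [[_ [b [_ [[Vb b_ge0] [b_neq0 _]]]]] _]].
by exists b; rewrite lt_def b_neq0.
Qed.

Lemma values_Z_pos_approximable p n (Q : {mpoly int[n]}) :
  prime p -> Q \is 2.-homog -> (exists z, values_Z Q z /\ 0 < z) ->
  pos_approximable p (values_Z Q).
Proof.
move=> p_pr homQ [_ [[w ->] Qw_gt0]] _ N [u ->].
have pN_gt0 : (0 < p ^ N)%N by rewrite expn_gt0 prime_gt0.
have [t Qt_gt0 Qt_dvd] := quadratic_shift u homQ Qw_gt0 pN_gt0.
by exists Q.@[fun i => u i + t%:Z * w i]; split=> //; eexists.
Qed.

Lemma values_N_pos_approximable p n (Q : {mpoly int[n]}) :
  prime p -> Q \is 2.-homog -> (exists z, values_N Q z /\ 0 < z) ->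
  pos_approximable p (values_N Q).
Proof.
move=> p_pr homQ [_ [[y ->] Qy_gt0]] _ N [x ->].
have pN_gt0 : (0 < p ^ N)%N by rewrite expn_gt0 prime_gt0.
have [t Qt_gt0 Qt_dvd] := quadratic_shift (fun i => (x i)%:Z) homQ Qy_gt0 pN_gt0.
exists Q.@[fun i => (x i)%:Z + t%:Z * (y i)%:Z]; split=> //.
by exists (fun i => x i + t * y i)%N; apply: meval_eq => i; rewrite PoszD PoszM.
Qed.

Theorem theorem2 (p : nat) (n : nat) (Q : {mpoly int[n]}) :
  prime p -> (0 < n)%N -> quadratic_form Q ->
  (dense_in_Qp p (ratio_set (nonneg_part (values_Z Q))) <->
     dense_in_Qp p (ratio_set (values_Z Q)) /\
     (exists z, values_Z Q z /\ 0 < z))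
  /\
  (dense_in_Qp p (ratio_set (nonneg_part (values_N Q))) <->
     dense_in_Qp p (ratio_set (values_N Q)) /\
     (exists z, values_N Q z /\ 0 < z)).
Proof.
move=> p_pr _ [_ homQ].
have nonneg_partW V : dense_in_Qp p (ratio_set (nonneg_part V)) ->
    dense_in_Qp p (ratio_set V) /\ exists z, V z /\ 0 < z.
  move=> dense_nn; split; last exact: dense_ratio_nonneg_pos dense_nn.
  by apply: dense_ratio_setS dense_nn => z [].
split; split=> [|[denseV posV]]; try exact: nonneg_partW.
- exact: dense_ratio_nonneg_part p_pr (values_Z_pos_approximable p_pr homQ posV) denseV.
- exact: dense_ratio_nonneg_part p_pr (values_N_pos_approximable p_pr homQ posV) denseV.
Qed.
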